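(* Let $\Gamma=(V,E,\psi)$ be a multigraph. Then $\Gamma$ is a $G$-graph with loops (i.e. $\Gamma\cong\Psi(G,S)$ for some group $G$ and some multiset $S$ of elements of $G$) if and only if there exist a subgroup $H$ of $Aut(\Gamma)$ and a clique with loops $C\subseteq V$ such that: (1) $C$ intersects every orbit of the action of $H$ on $V$; (2) for every $u\in C$, the stabilizer $Stab_H u$ is cyclic; (3) for every $u\in C$ and every orbit $O$ of the action of $H$ on $V$, $Stab_H u$ acts regularly on the set of edges incident to $u$ whose other end-point lies in $O$ (loops at $u$ count as edges with other end-point $u$).
   Context: A multigraph is a triple $(V,E,\psi)$ where $\psi$ assigns to each edge an unordered pair of not necessarily distinct vertices (loops and parallel edges allowed). A graph homomorphism/isomorphism is a pair $(f,f^\#)$ of maps on vertices and on edges compatible with $\psi$; $Aut(\Gamma)$ is the group of automorphisms, acting on both $V$ and $E$. An action is regular on a set $X$ if for all $x,y\in X$ there is exactly one group element sending $x$ to $y$. A clique with loops is a set of vertices any two distinct of which are adjacent and each of which carries at least one loop. For a group $G$ (identity $e$) and a multiset $S$ of elements of $G$, the $G$-graph $\Phi(G,S)$ is the multigraph whose vertex set is the union over the members $s$ of $S$ (counted with multiplicity; an element occurring several times contributes a separate copy of its cosets per occurrence) of the levels $V_s=\{\langle s\rangle x : x\in G\}$ of right cosets of $\langle s\rangle$, and which has, for vertices $\langle s\rangle x\in V_s$ and $\langle t\rangle y\in V_t$ with $s,t$ distinct members of $S$, one edge between them labeled $g$ for each $g\in\langle s\rangle x\cap\langle t\rangle y$,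 and no other edges. The $G$-graph with loops $\Psi(G,S)$ is obtained from $\Phi(G,S)$ by adding, at each vertex $\langle s\rangle x$ and for each $g\in\langle s\rangle x$, a loop labeled $g$. A multigraph is a $G$-graph with loops if it is isomorphic (ignoring labels) to some $\Psi(G,S)$. *)

From HB Require Import structures.
From mathcomp Require Import all_boot all_fingroup all_solvable.
Set Implicit Arguments. Unset Strict Implicit. Unset Printing Implicit Defensive.
Import GroupScope.
Local Open Scope group_scope.

(* A (finite) multigraph (V, E, psi): psi e = (a, b) encodes the UNORDERED
   pair {a, b}; only [ends psi e] = [set a; b] is ever used, so the order of
   the two components is irrelevant (a loop has a = b).                    *)
Definition ends (V E : finType) (psi : E -> V * V) (e : E) : {set V} :=
  [set (psi e).1; (psi e).2].

Definition mg_iso (V1 E1 V2 E2 : finType)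
  (psi1 : E1 -> V1 * V1) (psi2 : E2 -> V2 * V2) : Prop :=
  exists (f : V1 -> V2) (fe : E1 -> E2),
    [/\ bijective f, bijective fe &
        forall e, ends psi2 (fe e) = f @: ends psi1 e].

Definition mg_Aut (V E : finType) (psi : E -> V * V) : {set {perm V} * {perm E}} :=
  [set p : {perm V} * {perm E} | [forall e, ends psi (p.2 e) == p.1 @: ends psi e]].

(* ---------- The G-graph with loops Psi(G, S) ----------
   S : seq gT is the multiset; its members are indexed by 'I_(size S),
   so an element occurring several times gives several levels.            *)
Section GGraph.
Variables (gT : finGroupType) (S : seq gT).

Definition sS (i : 'I_(size S)) : gT := nth 1 S i.

(* vertices: (i, <s_i> x), i.e. the disjoint union of the levels V_{s_i} *)
Definition is_gvert (p : 'I_(size S) * {set gT}) : bool :=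
  p.2 \in rcosets <[sS p.1]> [set: gT].
Definition gvert := {p : 'I_(size S) * {set gT} | is_gvert p}.

Lemma gvert_proof (i : 'I_(size S)) (g : gT) : is_gvert (i, <[sS i]> :* g).
Proof. by apply/rcosetsP; exists g; rewrite ?inE. Qed.

Definition mkvert (i : 'I_(size S)) (g : gT) : gvert :=
  exist _ (i, <[sS i]> :* g) (gvert_proof i g).

(* edges: (i, j, g) with i <= j.  For i < j this is the edge labeled g between
   <s_i> g and <s_j> g (one per g in the intersection of the two cosets);
   for i = j it is the loop labeled g at <s_i> g.                          *)
Definition gedge := {t : 'I_(size S) * 'I_(size S) * gT | t.1.1 <= t.1.2}.

Definition gpsi (e : gedge) : gvert * gvert :=
  (mkvert (val e).1.1 (val e).2, mkvert (val e).1.2 (val e).2).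

End GGraph.

Definition is_GgraphL (V E : finType) (psi : E -> V * V) : Prop :=
  exists (gT : finGroupType) (S : seq gT), mg_iso psi (@gpsi gT S).

Definition clique_loops (V E : finType) (psi : E -> V * V) (C : {set V}) : Prop :=
  (forall u v, u \in C -> v \in C -> u != v -> exists e, ends psi e = [set u; v])
  /\ (forall u, u \in C -> exists e, ends psi e = [set u]).

Definition vorbit (V E : finType) (H : {set {perm V} * {perm E}}) (v : V) : {set V} :=
  [set (h.1 : {perm V}) v | h : {perm V} * {perm E} in H].

Definition vstab (V E : finType) (H : {set {perm V} * {perm E}}) (u : V)
  : {set {perm V} * {perm E}} := [set h in H | h.1 u == u].

Definition other_end (V E : finType) (psi : E -> V * V) (u : V) (e : E) : V :=
  if (psi e).1 == u then (psi e).2 else (psi e).1.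

Definition inc_edges (V E : finType) (psi : E -> V * V) (u : V) (O : {set V})
  : {set E} := [set e | (u \in ends psi e) && (other_end psi u e \in O)].

Definition regular_on_edges (V E : finType) (K : {set {perm V} * {perm E}})
  (X : {set E}) : Prop :=
  forall x y, x \in X -> y \in X -> exists! h, h \in K /\ h.2 x = y.

(* The group G acts on Psi(G, S) by right translation of cosets and of edge
   labels.  The vertices <s>1 form a clique with loops meeting every orbit (the
   orbits are the levels), the stabiliser of <s>1 is the cyclic group <s>, and
   it permutes the edges from <s>1 to a given level regularly, by translating
   their labels.  These conditions are invariant under isomorphism.

   Conversely, the conditions force C to meet every orbit exactly once.  Take
   G = H and let S consist of generators s_c of the stabilisers of the points
   c of C.  Then <s_c> x |-> x(c) is a bijection from the vertices of
   Psi(H, S) onto V, and sending the edge labelled x between <s_c> x and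
   <s_d> x to the image under x of a fixed clique edge between c and d is a
   bijection on edges: injectivity and surjectivity are exactly the uniqueness
   and existence halves of the regularity condition. *)

From mathcomp Require Import all_boot all_fingroup all_solvable.
Import GroupScope.
Set Implicit Arguments. Unset Strict Implicit. Unset Printing Implicit Defensive.

Definition Ggraph_action (V E : finType) (psi : E -> V * V)
    (H : {group {perm V} * {perm E}}) (C : {set V}) : Prop :=
  [/\ H \subset mg_Aut psi,
      clique_loops psi C,
      (forall v : V, exists2 c, c \in C & c \in vorbit H v),
      (forall u, u \in C -> cyclic (vstab H u)) &
      (forall u w, u \in C ->
         regular_on_edges (vstab H u) (inc_edges psi u (vorbit H w)))].

Lemma bij_inj_surj (A B : finType) (F : A -> B) :
  injective F -> (forall y, exists x, F x == y) -> bijective F.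
Proof.
move=> Finj Fsurj; exists (fun y => xchoose (Fsurj y)) => [x|y].
  by apply: Finj; apply/eqP; exact: (xchooseP (Fsurj (F x))).
exact/eqP/(xchooseP (Fsurj y)).
Qed.

Lemma eq_set2_sorted n (a b c d : 'I_n) : a <= b -> c <= d ->
  [set a; b] = [set c; d] -> a = c /\ b = d.
Proof.
have between (x y z : 'I_n) : x <= y -> z \in [set x; y] -> x <= z <= y.
  by move=> xy; rewrite !inE => /orP[] /eqP ->; rewrite leqnn ?xy.
move=> ab cd Eabcd.
have /(between _ _ _ cd)/andP[ca _] : a \in [set c; d] by rewrite -Eabcd !inE eqxx.
have /(between _ _ _ cd)/andP[_ bd] : b \in [set c; d] by rewrite -Eabcd !inE eqxx orbT.
have /(between _ _ _ ab)/andP[ac _] : c \in [set a; b] by rewrite Eabcd !inE eqxx.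
have /(between _ _ _ ab)/andP[_ db] : d \in [set a; b] by rewrite Eabcd !inE eqxx orbT.
by split; apply: val_inj; apply/eqP; rewrite eqn_leq ?ac ?ca ?bd ?db.
Qed.

Section Ends.
Variables (V E : finType) (psi : E -> V * V).

Lemma ends_other_end u e : u \in ends psi e -> ends psi e = [set u; other_end psi u e].
Proof.
rewrite /ends /other_end; case: (psi e) => a b /=; rewrite !inE.
case: (a =P u) => [-> //|na] /orP[/eqP au | /eqP <-]; first by case: na.
by rewrite setUC.
Qed.

Lemma other_end_eq u o e : ends psi e = [set u; o] -> other_end psi u e = o.
Proof.
move=> Eu; have /ends_other_end : u \in ends psi e by rewrite Eu !inE eqxx.
rewrite Eu; set o' := other_end psi u e => Eo.
have : o' \in [set u; o] by rewrite Eo !inE eqxx orbT.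
rewrite !inE => /orP[/eqP o'u | /eqP //].
have : o \in [set u; o'] by rewrite -Eo !inE eqxx orbT.
by rewrite o'u setUid inE => /eqP ->.
Qed.

Lemma mem_inc_edges u O e :
  (e \in inc_edges psi u O) = (u \in ends psi e) && (other_end psi u e \in O).
Proof. by rewrite /inc_edges in_set. Qed.

Lemma mg_Aut_ends x e : x \in mg_Aut psi -> ends psi (x.2 e) = x.1 @: ends psi e.
Proof. by rewrite inE => /forallP /(_ e) /eqP. Qed.

End Ends.

Section Orbits.
Variables (V E : finType) (H : {group {perm V} * {perm E}}).

Lemma mem_vorbit h v : h \in H -> h.1 v \in vorbit H v.
Proof. by move=> hH; apply/imsetP; exists h. Qed.

Lemma vorbit_refl v : v \in vorbit H v.
Proof. by have := mem_vorbit v (group1 H); rewrite perm1. Qed.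

Lemma vorbit_sym v w : w \in vorbit H v -> v \in vorbit H w.
Proof.
case/imsetP=> h hH ->; have := mem_vorbit (h.1 v) (groupVr hH).
by rewrite /= -permM mulgV perm1.
Qed.

End Orbits.

Section IsoTransport.
Variables (V1 E1 V2 E2 : finType) (psi1 : E1 -> V1 * V1) (psi2 : E2 -> V2 * V2).
Variables (f : V1 -> V2) (g : V2 -> V1) (fe : E1 -> E2) (ge : E2 -> E1).
Hypotheses (fK : cancel f g) (gK : cancel g f) (feK : cancel fe ge) (geK : cancel ge fe).
Hypothesis ends_fe : forall e, ends psi2 (fe e) = f @: ends psi1 e.

Lemma ends_ge t : ends psi1 (ge t) = g @: ends psi2 t.
Proof. by rewrite -[in RHS](geK t) ends_fe -imset_comp (eq_imset _ fK) imset_id. Qed.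

Lemma other_end_fe u e :
  u \in ends psi1 e -> other_end psi2 (f u) (fe e) = f (other_end psi1 u e).
Proof.
by move/ends_other_end=> Eu; apply: other_end_eq; rewrite ends_fe Eu imsetU1 imset_set1.
Qed.

Lemma conj_vperm_inj (p : {perm V1}) : injective (fun v => f (p (g v))).
Proof. exact: inj_comp (can_inj fK) (inj_comp (@perm_inj _ p) (can_inj gK)). Qed.

Lemma conj_eperm_inj (p : {perm E1}) : injective (fun e => fe (p (ge e))).
Proof. exact: inj_comp (can_inj feK) (inj_comp (@perm_inj _ p) (can_inj geK)). Qed.

Definition conj_aut (x : {perm V1} * {perm E1}) : {perm V2} * {perm E2} :=
  (perm (@conj_vperm_inj x.1), perm (@conj_eperm_inj x.2)).

Lemma conj_aut1 x v : (conj_aut x).1 v = f (x.1 (g v)).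
Proof. by rewrite permE. Qed.

Lemma conj_aut2 x e : (conj_aut x).2 e = fe (x.2 (ge e)).
Proof. by rewrite permE. Qed.

Lemma conj_autM : {in setT &, {morph conj_aut : x y / x * y}}.
Proof.
by move=> x y _ _; congr pair; apply/permP => v; rewrite !permM !permE /= ?fK ?feK.
Qed.

Canonical conj_aut_morphism := Morphism conj_autM.

Lemma mem_conj_aut (A : {set {perm V1} * {perm E1}}) x :
  x \in A -> conj_aut x \in conj_aut_morphism @* A.
Proof. exact: mem_morphim (in_setT x). Qed.

Lemma conj_aut_Aut x : x \in mg_Aut psi1 -> conj_aut x \in mg_Aut psi2.
Proof.
move=> xA; rewrite inE; apply/forallP => t; apply/eqP.
rewrite conj_aut2 ends_fe (mg_Aut_ends _ xA) ends_ge -!imset_comp.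
by apply: eq_imset => v /=; rewrite conj_aut1.
Qed.

Lemma vorbit_conj (H : {group {perm V1} * {perm E1}}) v :
  vorbit (conj_aut_morphism @* H) (f v) = f @: vorbit H v.
Proof.
rewrite /vorbit morphimEsub ?subsetT // -!imset_comp.
by apply: eq_imset => x /=; rewrite conj_aut1 fK.
Qed.

Lemma vstab_conj (H : {group {perm V1} * {perm E1}}) u :
  vstab (conj_aut_morphism @* H) (f u) = conj_aut_morphism @* vstab H u.
Proof.
apply/setP => y; rewrite inE; apply/andP/morphimP => [[/morphimP[x _ xH ->]]|].
  by rewrite conj_aut1 fK (inj_eq (can_inj fK)) => xu; exists x; rewrite ?inE ?xH.
case=> x _; rewrite inE => /andP[xH /eqP xu] ->.
by rewrite mem_conj_aut // conj_aut1 fK xu.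
Qed.

Lemma inc_edges_conj u (O : {set V1}) :
  inc_edges psi2 (f u) (f @: O) = fe @: inc_edges psi1 u O.
Proof.
apply/setP => t; rewrite -[t in LHS](geK t) (can2_imset_pre _ feK geK).
rewrite mem_inc_edges [in RHS]in_set mem_inc_edges ends_fe (mem_imset _ _ (can_inj fK)).
case ut: (u \in _) => //=.
by rewrite other_end_fe // (mem_imset _ _ (can_inj fK)).
Qed.

Lemma regular_on_edges_conj (K : {set {perm V1} * {perm E1}}) (X : {set E1}) :
  regular_on_edges K X -> regular_on_edges (conj_aut_morphism @* K) (fe @: X).
Proof.
move=> regK _ _ /imsetP[x xX ->] /imsetP[y yX ->].
have [h [[hK hxy] h_uniq]] := regK x y xX yX.
exists (conj_aut h); split; first by rewrite mem_conj_aut // conj_aut2 feK hxy.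
move=> _ [/morphimP[k _ kK ->]]; rewrite conj_aut2 feK => /(can_inj feK) kxy.
by rewrite (h_uniq k).
Qed.

Lemma clique_loops_conj C : clique_loops psi1 C -> clique_loops psi2 (f @: C).
Proof.
case=> Cedge Cloop; split.
  move=> _ _ /imsetP[u uC ->] /imsetP[v vC ->] fuv.
  have [|e Ee] := Cedge u v uC vC; first by apply: contraNneq fuv => ->.
  by exists (fe e); rewrite ends_fe Ee imsetU1 imset_set1.
move=> _ /imsetP[u uC ->]; have [e Ee] := Cloop u uC.
by exists (fe e); rewrite ends_fe Ee imset_set1.
Qed.

Lemma Ggraph_action_conj H C :
  Ggraph_action psi1 H C -> Ggraph_action psi2 (conj_aut_morphism @* H)%G (f @: C).
Proof.
case=> sHA Cclique Corbit Ccyclic Cregular; split.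
- apply/subsetP => _ /morphimP[x _ xH ->].
  exact/conj_aut_Aut/(subsetP sHA).
- exact: clique_loops_conj.
- move=> v; have [c cC cO] := Corbit (g v).
  exists (f c); first exact: imset_f.
  by rewrite -(gK v) vorbit_conj imset_f.
- move=> _ /imsetP[u uC ->]; rewrite vstab_conj.
  by case/cyclicP: (Ccyclic u uC) => x ->; rewrite morphim_cycle ?in_setT // cycle_cyclic.
- move=> _ w /imsetP[u uC ->]; rewrite vstab_conj -(gK w) vorbit_conj.
  by rewrite inc_edges_conj; apply/regular_on_edges_conj/Cregular.
Qed.

End IsoTransport.

Lemma mg_iso_sym (V1 E1 V2 E2 : finType) (psi1 : E1 -> V1 * V1) (psi2 : E2 -> V2 * V2) :
  mg_iso psi1 psi2 -> mg_iso psi2 psi1.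
Proof.
case=> f [fe [[g fK gK] [ge feK geK] ends_fe]].
exists g, ge; split; [by exists f | by exists fe | exact: ends_ge].
Qed.

Lemma Ggraph_action_iso (V1 E1 V2 E2 : finType)
    (psi1 : E1 -> V1 * V1) (psi2 : E2 -> V2 * V2) :
  mg_iso psi1 psi2 -> (exists H C, Ggraph_action psi1 H C) ->
  exists H C, Ggraph_action psi2 H C.
Proof.
case=> f [fe [[g fK gK] [ge feK geK] ends_fe]] [H [C HC]].
by exists (conj_aut_morphism fK gK feK geK @* H)%G, (f @: C); apply: Ggraph_action_conj.
Qed.

Section GgraphPsi.
Variables (gT : finGroupType) (S : seq gT).
Local Notation V := (gvert S).
Local Notation E := (gedge S).
Local Notation s := (@sS gT S).

Lemma gvertP (v : V) : exists x, v = mkvert (val v).1 x.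
Proof.
case: v => [[i A] /= Av]; case/rcosetsP: (Av) => x _ Ax.
by exists x; apply: val_inj; move: Ax => /= ->.
Qed.

Lemma eq_mkvert i x y : (mkvert i x == mkvert i y) = (x * y^-1 \in <[s i]>).
Proof.
rewrite -val_eqE /= xpair_eqE eqxx /=.
apply/eqP/idP => [Exy | xy].
  by rewrite -mem_rcoset -Exy rcoset_refl.
by apply/rcoset_eqP; rewrite mem_rcoset.
Qed.

Lemma gvert_mul_proof g (v : V) : is_gvert ((val v).1, (val v).2 :* g).
Proof. by have [x ->] := gvertP v; rewrite /= -rcosetM; apply: gvert_proof. Qed.

Definition gvert_mul g (v : V) : V := exist (@is_gvert gT S) _ (gvert_mul_proof g v).

Lemma gvert_mulE g i x : gvert_mul g (mkvert i x) = mkvert i (x * g).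
Proof. by apply: val_inj; rewrite /= rcosetM. Qed.

Lemma gvert_mul_inj g : injective (gvert_mul g).
Proof.
move=> [[i A] Av] [[j B] Bw] /(congr1 val) [Eij /(congr1 (fun A => A :* g^-1))].
by rewrite !rcosetK => EAB; apply: val_inj; rewrite /= Eij EAB.
Qed.

Definition gedge_mul g (t : E) : E :=
  exist (fun t : 'I_(size S) * 'I_(size S) * gT => t.1.1 <= t.1.2)
        ((val t).1, (val t).2 * g) (valP t).

Lemma gedge_mul_inj g : injective (gedge_mul g).
Proof.
move=> t u /(congr1 val) [Ei /mulIg Ex].
by apply: val_inj; rewrite [val t]surjective_pairing Ei Ex -surjective_pairing.
Qed.

Definition gtrans g : {perm V} * {perm E} :=
  (perm (@gvert_mul_inj g), perm (@gedge_mul_inj g)).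

Lemma gtrans1 g v : (gtrans g).1 v = gvert_mul g v.
Proof. by rewrite permE. Qed.

Lemma gtrans2 g t : (gtrans g).2 t = gedge_mul g t.
Proof. by rewrite permE. Qed.

Lemma gtransM : {in setT &, {morph gtrans : x y / x * y}}.
Proof.
move=> x y _ _; congr pair; apply/permP => v; rewrite permM !permE; apply: val_inj.
  by rewrite /= rcosetM.
by rewrite /= mulgA.
Qed.

Canonical gtrans_morphism := Morphism gtransM.

Definition gtransG := (gtrans_morphism @* setT)%G.

Definition glevel1 : {set V} := [set mkvert i 1 | i : 'I_(size S)].

Lemma gtransGP y : y \in gtransG -> exists g, y = gtrans g.
Proof. by case/morphimP=> g _ _ ->; exists g. Qed.

Lemma gtrans_in g : gtrans g \in gtransG.
Proof. exact: mem_morphim (in_setT g) (in_setT g). Qed.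

Lemma sort2_leq n (i j : 'I_n) :
  let p := if i <= j then (i, j) else (j, i) in p.1 <= p.2.
Proof. by case: leqP => // /ltnW. Qed.

Definition gedge_of (i j : 'I_(size S)) (x : gT) : E :=
  exist _ (if i <= j then (i, j) else (j, i), x) (sort2_leq i j).

Lemma ends_gedge_of i j x :
  ends (@gpsi gT S) (gedge_of i j x) = [set mkvert i x; mkvert j x].
Proof. by rewrite /ends /=; case: leqP => _ //; rewrite setUC. Qed.

Lemma gedge_ofE t : t = gedge_of (val t).1.1 (val t).1.2 (val t).2.
Proof. by apply: val_inj; rewrite /= (valP t) -!surjective_pairing. Qed.

Lemma gedge_ofC i j x : gedge_of i j x = gedge_of j i x.
Proof.
apply: val_inj => /=; case: leqP => ij; case: leqP => ji //.
- by have -> : i = j by apply: val_inj; apply/eqP; rewrite eqn_leq ij ji.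
- by have := ltn_trans ij ji; rewrite ltnn.
Qed.

Lemma gedge_mul_of g i j x : gedge_mul g (gedge_of i j x) = gedge_of i j (x * g).
Proof. exact: val_inj. Qed.

Lemma gtrans_Aut g : gtrans g \in mg_Aut (@gpsi gT S).
Proof.
rewrite inE; apply/forallP => t; rewrite gtrans2.
by rewrite /ends /= imsetU1 imset_set1 !gtrans1 !gvert_mulE.
Qed.

Lemma glevel1_clique : clique_loops (@gpsi gT S) glevel1.
Proof.
split=> [_ _ /imsetP[i _ ->] /imsetP[j _ ->] _ | _ /imsetP[i _ ->]].
  by exists (gedge_of i j 1); rewrite ends_gedge_of.
by exists (gedge_of i i 1); rewrite ends_gedge_of setUid.
Qed.

Lemma glevel1_meets_vorbits v : exists2 c, c \in glevel1 & c \in vorbit gtransG v.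
Proof.
have [x vE] := gvertP v; exists (mkvert (val v).1 1); first exact: imset_f.
apply/imsetP; exists (gtrans x^-1); first exact: gtrans_in.
by rewrite gtrans1 {2}vE gvert_mulE mulgV.
Qed.

Lemma vorbit_gtransG_index w v : v \in vorbit gtransG w -> (val v).1 = (val w).1.
Proof. by case/imsetP=> _ /gtransGP[g ->] ->; rewrite gtrans1. Qed.

Lemma vstab_gtransG i : vstab gtransG (mkvert i 1) = gtrans_morphism @* <[s i]>.
Proof.
apply/setP => y; rewrite inE; apply/andP/morphimP => [[/gtransGP[g ->]] | [g _ gs ->]].
  by rewrite gtrans1 gvert_mulE mul1g eq_mkvert invg1 mulg1 => gs; exists g.
by rewrite gtrans_in gtrans1 gvert_mulE mul1g eq_mkvert invg1 mulg1.
Qed.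

Lemma mkvert_index (i j : 'I_(size S)) (x y : gT) : mkvert i x = mkvert j y -> i = j.
Proof. by move/(congr1 (fun v => (val v).1)). Qed.

Lemma inc_edges_glevel1 i w t :
    t \in inc_edges (@gpsi gT S) (mkvert i 1) (vorbit gtransG w) ->
  t = gedge_of i (val w).1 (val t).2 /\ (val t).2 \in <[s i]>.
Proof.
have in_level1 (j : 'I_(size S)) y : mkvert i 1 = mkvert j y -> y \in <[s i]>.
  by move=> Ey; move: (Ey); rewrite -(mkvert_index Ey) => /eqP; rewrite eq_mkvert mul1g groupV.
rewrite mem_inc_edges /other_end /ends /= !inE.
case/andP=> /orP[/eqP Ea | /eqP Eb] Ow; split.
- move: Ow; rewrite -Ea eqxx => /vorbit_gtransG_index /= <-.
  by rewrite [LHS]gedge_ofE -(mkvert_index Ea).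
- exact: in_level1 Ea.
- rewrite [LHS]gedge_ofE gedge_ofC -(mkvert_index Eb); move: Ow; case: eqP => [Ea | _].
    by rewrite -Eb => /vorbit_gtransG_index /= <-; rewrite -(mkvert_index Ea).
  by move/vorbit_gtransG_index => /= <-.
- exact: in_level1 Eb.
Qed.

Lemma eq_ends_gedge t u :
    ends (@gpsi gT S) t = ends (@gpsi gT S) u ->
  (val t).1 = (val u).1 /\ mkvert (val t).1.1 (val t).2 = mkvert (val u).1.1 (val u).2.
Proof.
rewrite /ends /= => Etu.
have [Ea Eb] : (val t).1.1 = (val u).1.1 /\ (val t).1.2 = (val u).1.2.
  apply: eq_set2_sorted (valP t) (valP u) _.
  by have := congr1 (fun A : {set V} => [set (val v).1 | v in A]) Etu; rewrite !imsetU1 !imset_set1.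
split; first by rewrite [(val t).1]surjective_pairing [(val u).1]surjective_pairing Ea Eb.
have : mkvert (val t).1.1 (val t).2 \in
    [set mkvert (val u).1.1 (val u).2; mkvert (val u).1.2 (val u).2].
  by rewrite -Etu !inE eqxx.
by rewrite !inE Ea => /orP[/eqP // | /eqP Ed]; rewrite Ed (mkvert_index Ed).
Qed.

Lemma regular_gtransG i w :
  regular_on_edges (vstab gtransG (mkvert i 1))
                   (inc_edges (@gpsi gT S) (mkvert i 1) (vorbit gtransG w)).
Proof.
move=> t u /inc_edges_glevel1[-> ts] /inc_edges_glevel1[-> us].
set x := (val t).2; set y := (val u).2.
exists (gtrans (x^-1 * y)); split.
  by rewrite vstab_gtransG mem_morphim ?in_setT ?groupM ?groupV // gtrans2 gedge_mul_of mulKVg.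
move=> _ [/setIdP[/gtransGP[g ->] _]]; rewrite gtrans2 gedge_mul_of.
by move/(congr1 (fun t => (val t).2)) => /= <-; rewrite mulKg.
Qed.

Lemma Ggraph_action_Psi : Ggraph_action (@gpsi gT S) gtransG glevel1.
Proof.
split.
- by apply/subsetP => _ /gtransGP[g ->]; apply: gtrans_Aut.
- exact: glevel1_clique.
- exact: glevel1_meets_vorbits.
- move=> _ /imsetP[i _ ->]; rewrite vstab_gtransG.
  by rewrite morphim_cycle ?in_setT // cycle_cyclic.
- by move=> _ w /imsetP[i _ ->]; apply: regular_gtransG.
Qed.

End GgraphPsi.

Lemma regular_on_edges_fix1 (V E : finType) (K : {set {perm V} * {perm E}}) X x k :
  regular_on_edges K X -> 1 \in K -> x \in X -> k \in K -> k.2 x = x -> k = 1.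
Proof.
move=> regK K1 xX kK kx; have [h [_ h_uniq]] := regK x x xX xX.
by rewrite -(h_uniq k) ?(h_uniq 1) ?perm1.
Qed.

Section GgraphOfAction.
Variables (V E : finType) (psi : E -> V * V).
Variables (H : {group {perm V} * {perm E}}) (C : {set V}).
Hypotheses (sHAut : H \subset mg_Aut psi) (Cclique : clique_loops psi C).
Hypothesis Corbit : forall v : V, exists2 c, c \in C & c \in vorbit H v.
Hypothesis Ccyclic : forall u, u \in C -> cyclic (vstab H u).
Hypothesis Cregular : forall u w, u \in C ->
  regular_on_edges (vstab H u) (inc_edges psi u (vorbit H w)).

Lemma Aut_ends h e : h \in H -> ends psi (h.2 e) = h.1 @: ends psi e.
Proof. by move=> hH; apply/mg_Aut_ends/(subsetP sHAut). Qed.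

Lemma clique_vorbit_uniq u v : u \in C -> v \in C -> v \in vorbit H u -> u = v.
Proof.
(* Otherwise the stabiliser of u maps the loop at u to the edge uv, which lie
   in the same edge set; but automorphisms map loops to loops. *)
case: Cclique => Cedge Cloop uC vC vu; apply/eqP/negPn/negP => uv.
have [l El] := Cloop u uC; have [e Ee] := Cedge u v uC vC uv.
have El2 : ends psi l = [set u; u] by rewrite setUid.
have lu : l \in inc_edges psi u (vorbit H u).
  by rewrite mem_inc_edges El inE eqxx (other_end_eq El2) vorbit_refl.
have eu : e \in inc_edges psi u (vorbit H u).
  by rewrite mem_inc_edges Ee !inE eqxx (other_end_eq Ee).
have [h [[/setIdP[hH /eqP hu] hle] _]] := Cregular uC lu eu.
have : v \in ends psi (h.2 l) by rewrite hle Ee !inE eqxx orbT.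
by rewrite Aut_ends // El imset_set1 hu inE eq_sym (negbTE uv).
Qed.

Definition stab_gen u : {perm V} * {perm E} := odflt 1 [pick x | vstab H u == <[x]>].

Lemma vstab_gen u : u \in C -> vstab H u = <[stab_gen u]>.
Proof.
move=> uC; rewrite /stab_gen; case: pickP => [x /eqP // | none].
by case/cyclicP: (@Ccyclic u uC) => x Ex; have := none x; rewrite Ex eqxx.
Qed.

Lemma stab_gen_in u : u \in C -> stab_gen u \in H.
Proof. by move=> uC; have := cycle_id (stab_gen u); rewrite -vstab_gen // => /setIdP[]. Qed.

Local Notation G := (subg_of H).

Definition stab_gens : seq G :=
  [seq subg H (stab_gen (enum_val k)) | k <- enum 'I_#|C|].

Lemma size_stab_gens : size stab_gens = #|C|.
Proof. by rewrite size_map size_enum_ord. Qed.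

Definition cpoint (i : 'I_(size stab_gens)) : V := enum_val (cast_ord size_stab_gens i).

Lemma cpoint_in i : cpoint i \in C.
Proof. exact: enum_valP. Qed.

Lemma cpoint_inj : injective cpoint.
Proof. by move=> i j /enum_val_inj /cast_ord_inj. Qed.

Lemma cpoint_onto c : c \in C -> exists i, cpoint i = c.
Proof.
move=> cC; exists (cast_ord (esym size_stab_gens) (enum_rank_in cC c)).
by rewrite /cpoint cast_ordKV enum_rankK_in.
Qed.

Lemma sS_stab_gens i : @sS _ stab_gens i = subg H (stab_gen (cpoint i)).
Proof.
rewrite /sS (nth_map (cast_ord size_stab_gens i)); last first.
  by rewrite size_enum_ord -size_stab_gens.
by have -> : (i : nat) = cast_ord size_stab_gens i by []; rewrite nth_ord_enum.
Qed.

Lemma mem_cycle_sS i (y : G) :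
  (y \in <[@sS _ stab_gens i]>) = ((sgval y).1 (cpoint i) == cpoint i).
Proof.
have -> : ((sgval y).1 (cpoint i) == cpoint i) = (sgval y \in vstab H (cpoint i)).
  by rewrite inE subgP.
rewrite vstab_gen ?cpoint_in // sS_stab_gens; apply/cycleP/cycleP => [[k ->] | [k yk]].
  by exists k; rewrite morphX ?in_setT //= subgK // stab_gen_in ?cpoint_in.
by exists k; apply: subg_inj; rewrite yk morphX ?in_setT //= subgK // stab_gen_in ?cpoint_in.
Qed.

Lemma cedge_ex i j : exists e, ends psi e == [set cpoint i; cpoint j].
Proof.
case: Cclique => Cedge Cloop; have [<- | ij] := eqVneq i j.
  by have [e Ee] := Cloop _ (cpoint_in i); exists e; rewrite Ee setUid.
have [|e Ee] := Cedge _ _ (cpoint_in i) (cpoint_in j); first by rewrite (inj_eq cpoint_inj).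
by exists e; rewrite Ee.
Qed.

Definition cedge i j : E := xchoose (cedge_ex i j).

Lemma cedgeC i j : cedge i j = cedge j i.
Proof. by apply: eq_xchoose => e; rewrite setUC. Qed.

Lemma ends_cedge i j : ends psi (cedge i j) = [set cpoint i; cpoint j].
Proof. exact/eqP/(xchooseP (cedge_ex i j)). Qed.

Lemma cedge_inc i j : cedge i j \in inc_edges psi (cpoint i) (vorbit H (cpoint j)).
Proof.
by rewrite mem_inc_edges ends_cedge !inE eqxx (other_end_eq (ends_cedge i j)) vorbit_refl.
Qed.

(* Well defined since s_i fixes cpoint i. *)
Definition vertex_map (v : gvert stab_gens) : V :=
  (sgval (repr (val v).2)).1 (cpoint (val v).1).

Definition edge_map (t : gedge stab_gens) : E :=
  (sgval (val t).2).2 (cedge (val t).1.1 (val t).1.2).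

Lemma vertex_map_mk i x : vertex_map (mkvert i x) = (sgval x).1 (cpoint i).
Proof.
rewrite /vertex_map /=; have := mem_repr_rcoset [group of <[@sS _ stab_gens i]>] x.
by case/rcosetP => z; rewrite mem_cycle_sS => /eqP zi ->; rewrite /= permM zi.
Qed.

Lemma ends_edge_map t : ends psi (edge_map t) = vertex_map @: ends (@gpsi _ stab_gens) t.
Proof.
by rewrite /edge_map Aut_ends ?subgP // ends_cedge /ends /= !imsetU1 !imset_set1 !vertex_map_mk.
Qed.

Lemma vertex_map_inj : injective vertex_map.
Proof.
move=> v w; have [x ->] := gvertP v; have [y ->] := gvertP w.
move: (val v).1 (val w).1 => i j; rewrite !vertex_map_mk => Exy.
have ji : cpoint j \in vorbit H (cpoint i).
  apply/imsetP; exists (sgval (x * y^-1)); first exact: subgP.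
  by rewrite /= permM Exy -permM mulgV perm1.
have Eij : i = j by apply: cpoint_inj; apply: clique_vorbit_uniq ji; apply: cpoint_in.
rewrite -Eij in Exy *; apply/eqP; rewrite eq_mkvert mem_cycle_sS.
by rewrite /= permM Exy -permM mulgV perm1.
Qed.

Lemma vertex_map_onto v : exists w, vertex_map w == v.
Proof.
have [c cC /imsetP[h hH Ec]] := Corbit v; have [i Ei] := cpoint_onto cC.
by exists (mkvert i (subg H h^-1)); rewrite vertex_map_mk subgK ?groupV //= Ei Ec permK.
Qed.

Lemma edge_map_of i j x : edge_map (gedge_of i j x) = (sgval x).2 (cedge i j).
Proof. by rewrite /edge_map /=; case: leqP => // _; rewrite cedgeC. Qed.

Lemma one_in_vstab u : 1 \in vstab H u.
Proof. by rewrite inE group1 perm1 eqxx. Qed.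

Lemma edge_map_inj : injective edge_map.
Proof.
move=> t u Etu; have [Eij Ex] : (val t).1 = (val u).1 /\
    mkvert (val t).1.1 (val t).2 = mkvert (val u).1.1 (val u).2.
  by apply/eq_ends_gedge/(imset_inj vertex_map_inj); rewrite -!ends_edge_map Etu.
move: Ex Etu; rewrite /edge_map -Eij => /eqP; rewrite eq_mkvert mem_cycle_sS.
set e := cedge _ _; set k := sgval _ => k_fix Exy.
have k_stab : k \in vstab H (cpoint (val t).1.1) by rewrite inE subgP k_fix.
have k_e : k.2 e = e by rewrite /k /= permM Exy -permM mulgV perm1.
have k1 := regular_on_edges_fix1 (Cregular (cpoint_in _)) (one_in_vstab _)
  (cedge_inc _ _) k_stab k_e.
have Ext : (val t).2 = (val u).2 by apply: (mulIg (val u).2^-1); rewrite mulgV; apply: val_inj.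
by apply: val_inj; rewrite [val t]surjective_pairing [val u]surjective_pairing Eij Ext.
Qed.

Lemma edge_map_onto e : exists t, edge_map t == e.
Proof.
have [c cC /imsetP[h hH Ec]] := Corbit (psi e).1; have [i Ei] := cpoint_onto cC.
have e_i : cpoint i \in ends psi (h.2 e) by rewrite Aut_ends // Ei Ec imset_f // !inE eqxx.
have [c' c'C o_c'] := Corbit (other_end psi (cpoint i) (h.2 e)).
have [j Ej] := cpoint_onto c'C.
have he_inc : h.2 e \in inc_edges psi (cpoint i) (vorbit H (cpoint j)).
  by rewrite mem_inc_edges e_i vorbit_sym // Ej.
have [k [[/setIdP[kH _] ke] _]] := Cregular (cpoint_in i) (cedge_inc i j) he_inc.
exists (gedge_of i j (subg H (k * h^-1))).
by rewrite edge_map_of subgK ?groupM ?groupV //= permM ke permK.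
Qed.

Lemma Ggraph_of_action : mg_iso psi (@gpsi _ stab_gens).
Proof.
apply: mg_iso_sym; exists vertex_map, edge_map; split.
- exact: bij_inj_surj vertex_map_inj vertex_map_onto.
- exact: bij_inj_surj edge_map_inj edge_map_onto.
- exact: ends_edge_map.
Qed.

End GgraphOfAction.

Theorem theorem1 (V E : finType) (psi : E -> V * V) :
  is_GgraphL psi <->
  exists (H : {group {perm V} * {perm E}}) (C : {set V}),
    [/\ H \subset mg_Aut psi,
        clique_loops psi C,
        (forall v : V, exists2 c, c \in C & c \in vorbit H v),
        (forall u, u \in C -> cyclic (vstab H u)) &
        (forall u w, u \in C ->
           regular_on_edges (vstab H u) (inc_edges psi u (vorbit H w)))].
Proof.
split=> [[gT [S /mg_iso_sym Psi_iso]] | [H [C [sHAut Cclique Corbit Ccyclic Cregular]]]].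
  apply: Ggraph_action_iso Psi_iso _.
  by exists (gtransG S), (glevel1 S); apply: Ggraph_action_Psi.
exists (subg_of H), (stab_gens H C).
exact: Ggraph_of_action sHAut Cclique Corbit Ccyclic Cregular.
Qed.
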